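(* For $\upsilon=2/3$, the limit $\lim_{N\to\infty,\ N\text{ odd}}\rho(\upsilon,N)$ does not exist (here $N$ ranges over all odd positive integers, not only primes).
   Context: For an integer $N\ge 2$ and $f:\mathbb{Z}_N\to\mathbb{C}$, define $\mathbb{E}(f)=\frac1N\sum_{n\in\mathbb{Z}_N} f(n)$ and $\Lambda_3(f)=\frac{1}{N^2}\sum_{n,d\in\mathbb{Z}_N} f(n)f(n+d)f(n+2d)$. For $\upsilon\in(0,1]$, $\rho(\upsilon,N)=\min\{\Lambda_3(f): f:\mathbb{Z}_N\to[0,1],\ \mathbb{E}(f)\ge\upsilon\}$. *)

From HB Require Import structures.
From mathcomp Require Import all_boot all_order all_algebra.
From mathcomp Require Import all_classical all_reals all_analysis.
Set Implicit Arguments. Unset Strict Implicit. Unset Printing Implicit Defensive.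
Import Order.TTheory GRing.Theory Num.Theory.
Local Open Scope ring_scope.
Local Open Scope classical_set_scope.

(* Functions on Z_N are functions 'Z_N -> R ; only used for N >= 2,
   where 'Z_N is exactly Z/NZ. *)

Definition Ef (R : realType) (N : nat) (f : 'Z_N -> R) : R :=
  N%:R^-1 * \sum_(n : 'Z_N) f n.

Definition Lambda3 (R : realType) (N : nat) (f : 'Z_N -> R) : R :=
  (N%:R ^+ 2)^-1 *
    \sum_(n : 'Z_N) \sum_(d : 'Z_N) f n * f (n + d) * f (n + d *+ 2).

Definition admissible (R : realType) (v : R) (N : nat) : set ('Z_N -> R) :=
  [set f | (forall n, 0 <= f n <= 1) /\ v <= @Ef R N f].

(* rho(v,N) = min of Lambda_3 over admissible f (the minimum is attained
   by compactness, so it equals the infimum). *)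
Definition rho (R : realType) (v : R) (N : nat) : R :=
  inf [set @Lambda3 R N f | f in @admissible R v N].

From HB Require Import structures.
From mathcomp Require Import all_boot all_order all_algebra.
From mathcomp Require Import all_classical all_reals all_analysis.
From mathcomp Require Import ring lra zify.
Import Order.TTheory GRing.Theory Num.Theory numFieldNormedType.Exports.
Local Open Scope ring_scope.
Local Open Scope classical_set_scope.

(* If 3 divides N, the indicator of Z_N \ 3Z_N has density 2/3, and any 3-term
   progression inside it has its difference in 3Z_N, so Lambda3 <= 2/3 * 1/3 = 2/9.
   If N is coprime to 6, a polynomial inequality for the values of f on a 5-term
   progression x, x + d, ..., x + 4d, averaged over all (x, d), gives
   8 Lambda3 >= 12 E^2 - 5 E, because 1, 2, 3, 4 are invertible mod N and so every
   pair and 3-term subprogression is equidistributed; at density 2/3 this is 1/4.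
   Among the odd N = 2k + 3 both residues 3 and 5 mod 6 occur infinitely often. *)

Section ProgressionSums.
Context {R : pzRingType} {N : nat}.
Implicit Types (f : 'Z_N -> R) (i s : nat).

Lemma sum_Zp2_affine (G : 'Z_N * 'Z_N -> R) i (c : 'Z_N) :
  c \is a GRing.unit -> \sum_p G (p.1 + p.2 *+ i, c * p.2) = \sum_p G p.
Proof.
move=> c_unit; rewrite [RHS](reindex_inj (h := fun p => (p.1 + p.2 *+ i, c * p.2))) //.
move=> [x d] [y e] /= exy; have ed : d = e := mulrI c_unit (congr1 snd exy).
by move/(congr1 fst): exy; rewrite /= ed => /addIr ->.
Qed.

Lemma sum_Zp2_progression1 f i :
  \sum_p f (p.1 + p.2 *+ i) = (\sum_x f x) *+ #|'Z_N|.
Proof.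
have /= -> := sum_Zp2_affine (fun p => f p.1) i 1 (unitr1 _).
rewrite -(pair_bigA _ (fun x _ => f x)) /= -sumrMnl.
by apply: eq_bigr => x _; rewrite sumr_const.
Qed.

Lemma sum_Zp2_progression2 f i j : (i <= j)%N -> ((j - i)%:R : 'Z_N) \is a GRing.unit ->
  \sum_p f (p.1 + p.2 *+ i) * f (p.1 + p.2 *+ j) = (\sum_x f x) ^+ 2.
Proof.
move=> le_ij unit_ji.
have -> : (\sum_x f x) ^+ 2 = \sum_p f p.1 * f (p.1 + p.2).
  rewrite expr2 big_distrl -(pair_bigA _ (fun x d => f x * f (x + d))) /=.
  by apply: eq_bigr => x _; rewrite mulr_sumr (reindex_inj (addrI x)).
rewrite -(sum_Zp2_affine (fun p => f p.1 * f (p.1 + p.2)) i _ unit_ji) /=.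
by apply: eq_bigr => p _; rewrite mulr_natl -addrA -mulrnDr subnKC.
Qed.

Lemma sum_Zp2_progression3 f i s : (s%:R : 'Z_N) \is a GRing.unit ->
  \sum_p f (p.1 + p.2 *+ i) * f (p.1 + p.2 *+ (i + s)) * f (p.1 + p.2 *+ (i + s * 2)) =
  \sum_p f p.1 * f (p.1 + p.2) * f (p.1 + p.2 *+ 2).
Proof.
move=> unit_s.
rewrite -(sum_Zp2_affine (fun p => f p.1 * f (p.1 + p.2) * f (p.1 + p.2 *+ 2)) i _ unit_s) /=.
by apply: eq_bigr => p _; rewrite !mulr_natl -!addrA -mulrnA -!mulrnDr.
Qed.

End ProgressionSums.

Lemma ap5_poly_ge0 {R : numDomainType} (a : nat -> R) : (forall i, 0 <= a i <= 1) ->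
  0 <= 3 * (a 0%N * a 1%N * a 2%N) + 2 * (a 0%N * a 2%N * a 4%N)
       + 2 * (a 1%N * a 2%N * a 3%N) + a 2%N * a 3%N * a 4%N
       + (a 0%N + a 1%N + 3 * a 2%N)
       - (2 * (a 0%N * a 1%N) + 3 * (a 0%N * a 2%N) - a 0%N * a 3%N + a 0%N * a 4%N
          + 3 * (a 1%N * a 2%N) + a 1%N * a 3%N - a 1%N * a 4%N
          + 2 * (a 2%N * a 3%N) + 2 * (a 2%N * a 4%N)).
Proof.
move=> a01; have a_ge0 i : 0 <= a i by case/andP: (a01 i).
have a_le1 i : 0 <= 1 - a i by rewrite subr_ge0; case/andP: (a01 i).
set x0 := a 0%N; set x1 := a 1%N; set x2 := a 2%N; set x3 := a 3%N; set x4 := a 4%N.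
(* the multilinear polynomial as a nonnegative combination of the vertex weights
   prod_i x_i^e_i (1 - x_i)^(1 - e_i) of the unit cube *)
have -> : 3 * (x0 * x1 * x2) + 2 * (x0 * x2 * x4) + 2 * (x1 * x2 * x3) + x2 * x3 * x4
       + (x0 + x1 + 3 * x2)
       - (2 * (x0 * x1) + 3 * (x0 * x2) - x0 * x3 + x0 * x4 + 3 * (x1 * x2)
          + x1 * x3 - x1 * x4 + 2 * (x2 * x3) + 2 * (x2 * x4))
  = 3 * ((1 - x0) * (1 - x1) * x2 * (1 - x3) * (1 - x4))
    + (1 - x0) * (1 - x1) * x2 * (1 - x3) * x4
    + (1 - x0) * (1 - x1) * x2 * x3 * (1 - x4)
    + (1 - x0) * x1 * (1 - x2) * (1 - x3) * (1 - x4)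
    + 2 * ((1 - x0) * x1 * (1 - x2) * (1 - x3) * x4)
    + (1 - x0) * x1 * (1 - x2) * x3 * x4
    + (1 - x0) * x1 * x2 * (1 - x3) * (1 - x4)
    + x0 * (1 - x1) * (1 - x2) * (1 - x3) * (1 - x4)
    + 2 * (x0 * (1 - x1) * (1 - x2) * x3 * (1 - x4))
    + x0 * (1 - x1) * (1 - x2) * x3 * x4
    + x0 * (1 - x1) * x2 * (1 - x3) * (1 - x4)
    + x0 * x1 * x2 * x3 * x4 by ring.
by repeat apply: addr_ge0; repeat apply: mulr_ge0 => //;
  rewrite /x0 /x1 /x2 /x3 /x4 ?a_ge0 ?a_le1.
Qed.

(* Averaged over (x, d), each cubic monomial of [ap5_poly_ge0] becomes the Lambda3
   sum, each quadratic one (sum f)^2 and each linear one N * sum f. *)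
Lemma sum_Zp2_ap3_lower {R : numDomainType} {N : nat} (f : 'Z_N -> R) :
  (1 < N)%N -> coprime N 6 -> (forall n, 0 <= f n <= 1) ->
  0 <= 8 * \sum_p f p.1 * f (p.1 + p.2) * f (p.1 + p.2 *+ 2)
       + 5 * N%:R * \sum_x f x - 12 * (\sum_x f x) ^+ 2.
Proof.
move=> N_gt1 coN6 f01.
have [coN2 coN3] : coprime N 2 /\ coprime N 3.
  by apply/andP; rewrite -coprimeMr.
have unit1 : (1%:R : 'Z_N) \is a GRing.unit by rewrite unitr1.
have unit2 : (2%:R : 'Z_N) \is a GRing.unit by rewrite unitZpE.
have unit3 : (3%:R : 'Z_N) \is a GRing.unit by rewrite unitZpE.
have unit4 : (4%:R : 'Z_N) \is a GRing.unit by rewrite unitZpE // (coprimeMr _ 2 2) coN2.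
have := @sumr_ge0 _ _ (index_enum _) xpredT _
  (fun (p : 'Z_N * 'Z_N) _ => ap5_poly_ge0 _ (fun i => f01 (p.1 + p.2 *+ i))).
rewrite !(big_split, sumrB, sumrN) -!mulr_sumr /=.
rewrite (sum_Zp2_progression3 f 0 1) // (sum_Zp2_progression3 f 0 2) //.
rewrite (sum_Zp2_progression3 f 1 1) // (sum_Zp2_progression3 f 2 1) //.
have card_ZN : #|'Z_N| = N by rewrite card_ord Zp_cast.
rewrite !sum_Zp2_progression2 // !sum_Zp2_progression1 card_ZN.
move: (\sum_p _ * _) (\sum_x f x) => L S H; apply: le_trans H _.
by rewrite -[S *+ N]mulr_natr le_eqVlt; apply/orP; left; apply/eqP; ring.
Qed.

Lemma Lambda3_ge0 (R : realType) (N : nat) (f : 'Z_N -> R) :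
  (forall n, 0 <= f n <= 1) -> 0 <= Lambda3 f.
Proof.
move=> f01; have f_ge0 x : 0 <= f x by case/andP: (f01 x).
rewrite /Lambda3 mulr_ge0 ?invr_ge0 ?exprn_ge0 //.
by do 2!apply: sumr_ge0 => ? _; rewrite !mulr_ge0.
Qed.

Lemma Lambda3_ge_quarter (R : realType) (N : nat) (f : 'Z_N -> R) :
  (1 < N)%N -> coprime N 6 -> (forall n, 0 <= f n <= 1) ->
  2 / 3 <= Ef f -> 1 / 4 <= Lambda3 f.
Proof.
move=> N_gt1 coN6 f01; have := sum_Zp2_ap3_lower f N_gt1 coN6 f01.
have S_ge0 : 0 <= \sum_x f x by apply: sumr_ge0 => x _; case/andP: (f01 x).
have N_gt0 : (0 : R) < N%:R by rewrite ltr0n ltnW.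
rewrite /Ef /Lambda3 pair_bigA /= ler_pdivlMl // ler_pdivlMl ?exprn_gt0 //.
move: (\sum_p _ * _) (\sum_x f x) S_ge0 => L S S_ge0 key S_ge.
(* the bound 8 L >= S (12 S - 5 N) is increasing in S >= 2 N / 3 *)
have : 0 <= (3 * S - 2 * N%:R) * (4 * S + N%:R) by apply: mulr_ge0; lra.
nra.
Qed.

Lemma rho_ge_quarter (R : realType) (N : nat) :
  (1 < N)%N -> coprime N 6 -> 1 / 4 <= rho (2 / 3 : R) N.
Proof.
move=> N_gt1 coN6; apply: lb_le_inf.
  exists (Lambda3 (fun _ : 'Z_N => 1 : R)), (fun _ => 1) => //; split.
    by move=> _; rewrite lexx ler01.
  have N_gt0 : (0 : R) < N%:R by rewrite ltr0n ltnW.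
  by rewrite /Ef sumr_const card_ord Zp_cast // -mulr_natr mul1r mulVf ?gt_eqF //; lra.
by move=> _ [f [f01 Ef_ge] <-]; apply: Lambda3_ge_quarter.
Qed.

Lemma sum_nat_dvdn (d n : nat) : (d %| n)%N -> (\sum_(0 <= i < n) (d %| i) = n %/ d)%N.
Proof.
case: n => [|n] dvd_dn; first by rewrite big_geq ?div0n.
by rewrite big_ltn // dvdn0 divn_count_dvd [in RHS]big_nat_recr //= dvd_dn addnC.
Qed.

Lemma sum_Zp_dvdn (R : pzSemiRingType) (N d : nat) : (1 < N)%N -> (d %| N)%N ->
  \sum_(x : 'Z_N) ((d %| x)%:R : R) = (N %/ d)%:R.
Proof.
move=> N_gt1 dvd_dN; rewrite -natr_sum -(big_mkord xpredT (fun i => (d %| i) : nat)).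
by rewrite Zp_cast // sum_nat_dvdn.
Qed.

Lemma Zp_modnD {N : nat} (d : nat) (x y : 'Z_N) : (1 < N)%N -> (d %| N)%N ->
  ((x + y)%R = x + y %[mod d])%N.
Proof. by move=> N_gt1 dvd_dN; rewrite /= modn_dvdm // Zp_cast. Qed.

Definition in3Z {N : nat} (x : 'Z_N) : bool := (3 %| x)%N.

Lemma in3Z_ap3 {N : nat} (n d : 'Z_N) : (1 < N)%N -> (3 %| N)%N ->
  [&& ~~ in3Z n, ~~ in3Z (n + d) & ~~ in3Z (n + d *+ 2)] ==> in3Z d.
Proof.
move=> N_gt1 dvd3N; rewrite /in3Z mulr2n addrA.
have := Zp_modnD 3 n d N_gt1 dvd3N; have := Zp_modnD 3 (n + d) d N_gt1 dvd3N.
move: (nat_of_ord (n + d)) (nat_of_ord (n + d + d)) => a b; lia.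
Qed.

Lemma rho_le_two_ninths (R : realType) (N : nat) :
  (1 < N)%N -> (3 %| N)%N -> rho (2 / 3 : R) N <= 2 / 9.
Proof.
move=> N_gt1 dvd3N; have [M eNM] := dvdnP dvd3N.
pose f (x : 'Z_N) : R := (~~ in3Z x)%:R.
have f01 x : 0 <= f x <= 1 by rewrite /f; case: (in3Z x); rewrite ?lexx ?ler01.
have M_gt0 : (0 : R) < M%:R by rewrite ltr0n; move: N_gt1; rewrite eNM; case: (M).
have NM : (N%:R : R) = M%:R * 3 by rewrite eNM natrM.
have sum_in3Z : \sum_(x : 'Z_N) (in3Z x)%:R = M%:R :> R.
  by rewrite /in3Z sum_Zp_dvdn // eNM mulnK.
have sum_f : \sum_x f x = M%:R * 2.
  have : \sum_x f x + M%:R = N%:R.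
    rewrite -sum_in3Z -big_split /= -[in RHS](card_ord N) -[N in RHS]Zp_cast //.
    rewrite -sumr_const.
    by apply: eq_bigr => x _; rewrite -natrD addn_negb.
  by rewrite NM => e; apply: (addIr M%:R); rewrite e; ring.
have f_adm : admissible (2 / 3 : R) f.
  split=> //; rewrite /Ef sum_f NM.
  by rewrite (_ : _ * _ = 2 / 3) //; field; rewrite gt_eqF.
apply: le_trans (ge_inf _ (ex_intro2 _ _ f f_adm erefl)) _.
  by exists 0 => _ [g [g01 _] <-]; apply: Lambda3_ge0.
have ap3_le n d : f n * f (n + d) * f (n + d *+ 2) <= f n * (in3Z d)%:R.
  rewrite /f; move: (in3Z_ap3 n d N_gt1 dvd3N).
  by case: (in3Z n) (in3Z (n + d)) (in3Z (n + d *+ 2)) (in3Z d) => [] [] [] [];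
    rewrite ?mulr0 ?mul0r ?mulr1 ?mul1r ?lexx ?ler01.
apply: (@le_trans _ _ ((N%:R ^+ 2)^-1 * \sum_n \sum_d f n * (in3Z d)%:R)).
  rewrite /Lambda3 ler_wpM2l ?invr_ge0 ?exprn_ge0 //.
  by do 2!apply: ler_sum => ? _; apply: ap3_le.
under eq_bigr do rewrite -mulr_sumr.
rewrite -mulr_suml sum_f sum_in3Z NM (_ : _ * _ = 2 / 9) //.
by field; rewrite gt_eqF.
Qed.

Lemma not_cvg_oscillating (R : realType) (u : nat -> R) (a b : R) : a < b ->
  (forall m, exists2 n, (m <= n)%N & u n <= a) ->
  (forall m, exists2 n, (m <= n)%N & b <= u n) ->
  ~ exists l : R, u @ \oo --> l.
Proof.
move=> lt_ab often_le often_ge [l ul].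
have e_gt0 : 0 < (b - a) / 2 by lra.
have [m _ near_l] := cvgr_dist_lt _ _ ul _ e_gt0.
have [n1 m_le_n1 un1] := often_le m; have [n2 m_le_n2 un2] := often_ge m.
move: (near_l n1 m_le_n1) (near_l n2 m_le_n2); rewrite /= !ltr_norml; lra.
Qed.

Theorem theorem2 (R : realType) :
  ~ (exists l : R,
       (fun k : nat => rho (2 / 3 : R) (2 * k + 3)%N) @ \oo --> l).
Proof.
apply: (@not_cvg_oscillating _ _ (2 / 9) (1 / 4)); first lra.
  move=> m; exists (3 * m)%N; first exact: leq_pmull.
  by apply: rho_le_two_ninths; lia.
move=> m; exists (3 * m + 1)%N; first lia.
apply: rho_ge_quarter; first lia.
by rewrite -coprime_modl (_ : _ %% 6 = 5)%N //; lia.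
Qed.
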